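(* Let $p\ge3$ be a prime, let $k\ge1$ and let $c>0$. If $D$ is a probability distribution on $\mathbb{F}_p^k$ such that $D(W)\le1-c$ for every proper affine subspace $W$ of $\mathbb{F}_p^k$, then for every positive integer $M\ge 2kp^2\log p/(c\pi^2)$ the distribution $MD$ satisfies $|MD(x)-p^{-k}|\le p^{-2k}$ for each $x\in\mathbb{F}_p^k$.
   Context: $D(W)=\sum_{x\in W}D(x)$. $MD$ denotes the $M$-fold convolution of $D$ with itself, i.e. the distribution of the sum of $M$ independent random variables with distribution $D$. *)

From HB Require Import structures.
From mathcomp Require Import all_boot all_order all_algebra.
From mathcomp Require Import all_classical all_reals all_analysis.
Set Implicit Arguments. Unset Strict Implicit. Unset Printing Implicit Defensive.
Import Order.TTheory GRing.Theory Num.Theory.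
Local Open Scope ring_scope.

Definition is_distr (R : realType) (T : finType) (D : T -> R) : Prop :=
  (forall x, 0 <= D x) /\ \sum_(x : T) D x = 1.

Definition mass (R : realType) (T : finType) (D : T -> R) (W : {set T}) : R :=
  \sum_(x in W) D x.

Definition affine_set (p k : nat) (a : 'rV['F_p]_k) (V : {vspace 'rV['F_p]_k})
  : {set 'rV['F_p]_k} := [set x | x - a \in V].

Definition proper_affine_subspace (p k : nat) (W : {set 'rV['F_p]_k}) : Prop :=
  exists (a : 'rV['F_p]_k) (V : {vspace 'rV['F_p]_k}),
    V != fullv /\ W = affine_set a V.

(* M-fold convolution of D: the distribution of the sum of M independent
   random variables with distribution D. *)
Definition convpow (R : realType) (p k : nat) (M : nat) (D : 'rV['F_p]_k -> R)
  (x : 'rV['F_p]_k) : R :=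
  \sum_(f : {ffun 'I_M -> 'rV['F_p]_k} | \sum_(i < M) f i == x) \prod_(i < M) D (f i).

From HB Require Import structures.
From mathcomp Require Import all_boot all_order all_algebra.
From mathcomp Require Import all_classical all_reals all_analysis.
From mathcomp Require Import complex.
From mathcomp Require Import ring lra zify.
Set Implicit Arguments. Unset Strict Implicit. Unset Printing Implicit Defensive.
Import Order.TTheory GRing.Theory Num.Theory.
Import numFieldNormedType.Exports.
Local Open Scope ring_scope.

(* Fourier analysis on F_p^k with the characters e_r(z) = omega^(r.z), omega = exp(2 i pi / p):
   p^k MD(x) = sum_r hat D(r)^M e_r(-x), and the term r = 0 equals 1.  For r <> 0,
   |hat D(r)|^2 = sum_{y,z} D(y) D(z) cos(2 pi (r.y - r.z) / p) <= 1 - 2 sin^2(pi/p) (1 - P),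
   where P is the probability that two independent samples of D lie on the same affine
   hyperplane r.z = t.  Each such hyperplane has mass at most 1 - c, whence 1 - P >= c, and
   1 - P >= 2c(1 - c) when c <= 1/2; elementary estimates of sin, exp and pi turn this into
   |hat D(r)| <= exp(-c pi^2 / p^2), and the bound on M makes each of the p^k - 1 error terms
   at most p^(-2k). *)

Section ElementaryBounds.
Variable R : realType.

Lemma sin_ge_cubic (x : R) : 0 < x < 2 -> x - x ^+ 3 / 6 <= sin x.
Proof.
move=> /andP[x0 x2]; have sinx := @cvg_sin_coeff' R x.
rewrite -(cvg_lim (@Rhausdorff R) sinx).
have -> : x - x ^+ 3 / 6 = \sum_(0 <= i < 2) sin_coeff' x i.
  rewrite big_nat_recr // big_nat_recr // big_nil /sin_coeff' /=.
  by rewrite add0r expr0z expr1z mul1r mulN1r expr1 divr1 mulNr.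
apply/ltW/lt_sum_lim_series; first by move/cvgP in sinx.
move=> d; rewrite /sin_coeff'.
set N := (2 + d.*2).*2.+1.
have -> : (2 + d.*2.+1).*2.+1 = N.+2 by rewrite /N addnS doubleS.
rewrite -!exprnP -(signr_odd _ (2 + d.*2.+1)) -(signr_odd _ (2 + d.*2)).
rewrite !oddD !odd_double /= odd_double expr0 expr1 mul1r mulN1r mulNr subr_gt0.
have N5 : (5 <= N)%N by rewrite /N -!muln2; lia.
have fN : 0 < N`!%:R :> R by rewrite ltr0n fact_gt0.
have xN : 0 < x ^+ N / N`!%:R by rewrite divr_gt0 ?exprn_gt0.
clearbody N.
(* each positive tail term dominates the next (negative) one: their ratio is x^2 / ((N + 1)(N + 2)) < 1 *)
have -> : x ^+ N.+2 / (N.+2)`!%:R =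
    x ^+ N / N`!%:R * (x * x / ((N.+2)%:R * (N.+1)%:R)).
  rewrite !factS !natrM !exprS; field.
  by have := ler0n R N => N0; apply/and3P; split; apply: lt0r_neq0 => //; lra.
rewrite -[ltRHS]mulr1 ltr_pM2l // ltr_pdivrMr ?mulr_gt0 // mul1r.
have : 5 <= N%:R :> R by rewrite ler_nat.
rewrite -!natr1; nra.
Qed.

Lemma pi_lt_16_5 : pi < 16 / 5 :> R.
Proof.
have s45 : 4/5 - (4/5) ^+ 3 / 6 <= sin (4/5) :> R by apply: sin_ge_cubic; lra.
have cos85 : cos (8/5) < 0 :> R.
  have -> : 8/5 = (4/5) *+ 2 :> R by rewrite mulr2n; lra.
  rewrite cos_mulr2n cos2sin2.
  have : (4/5 - (4/5) ^+ 3 / 6) ^+ 2 <= sin (4/5) ^+ 2 :> R.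
    by apply: lerXn2r; rewrite ?nnegrE //; lra.
  lra.
rewrite ltNge; apply/negP => pi_ge.
have pihalf_gt : 8/5 < pi / 2 :> R.
  rewrite lt_neqAle; apply/andP; split; last lra.
  by apply: contraTneq cos85 => ->; rewrite cos_pihalf ltxx.
have : 0 < cos (8/5) :> R.
  by apply: cos_gt0_pihalf; apply/andP; split => //; have := pi_gt0 R; lra.
lra.
Qed.

Lemma expR_ge_quartic (x : R) : 0 <= x <= 4 -> (1 - x / 4) ^+ 4 <= expR (- x).
Proof.
move=> /andP[x0 x4].
have -> : - x = - (x / 4) * 4%:R by field.
rewrite expRM_natr; apply: lerXn2r; rewrite ?nnegrE ?expR_ge0 //; first lra.
by have := expR_ge1Dx (- (x / 4)); lra.
Qed.

Lemma expRX_le_expRN (a L : R) M : 0 < a -> L / a <= M%:R -> expR (- a) ^+ M <= expR (- L).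
Proof.
move=> a0; rewrite ler_pdivrMr // => LM.
by rewrite -expRM_natr ler_expR; lra.
Qed.

End ElementaryBounds.

Section GapBounds.
Variable R : realType.

(* Both bounds rest on (1 - x)^4 = 1 + 2 x (-2 + 3 x - 2 x^2 + x^3 / 2) at x = c w / 2. *)
Lemma gap_le_quartic_large (c w : R) : 1/2 <= c <= 1 -> 0 <= w <= 256/225 ->
  1 - 2 * c * (w * (1 - w / 6) ^+ 2) <= (1 - c * w / 2) ^+ 4.
Proof.
move=> /andP[c0 c1] /andP[w0 w1].
have quad0 : 0 <= 1/12 - 5 * w / 72 + w ^+ 2 / 128 by nra.
set x := c * w / 2.
have x0 : w / 4 <= x by rewrite /x; nra.
have x1 : x <= w / 2 by rewrite /x; nra.
have defect : 0 <= -2 + 3 * x - 2 * x ^+ 2 + x ^+ 3 / 2 + 2 * (1 - w / 6) ^+ 2.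
  have : 0 <= (x - w/4) * (3 - 2 * (x + w/4) + (x ^+ 2 + x * (w/4) + (w/4) ^+ 2) / 2).
    by apply: mulr_ge0; nra.
  nra.
rewrite -subr_ge0.
have -> : (1 - x) ^+ 4 - (1 - 2 * c * (w * (1 - w / 6) ^+ 2)) =
    2 * x * (-2 + 3 * x - 2 * x ^+ 2 + x ^+ 3 / 2 + 2 * (1 - w / 6) ^+ 2).
  by rewrite /x; field.
by apply: mulr_ge0 => //; rewrite /x; nra.
Qed.

Lemma gap_le_quartic_small (c w : R) : 0 <= c <= 1/2 -> 0 <= w <= 256/225 ->
  1 - 4 * c * (1 - c) * (w * (1 - w / 6) ^+ 2) <= (1 - c * w / 2) ^+ 4.
Proof.
move=> /andP[c0 c1] /andP[w0 w1].
have quad0 : 0 <= 1/12 - 5 * w / 72 + w ^+ 2 / 128 by nra.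
set x := c * w / 2.
have x0 : 0 <= x by rewrite /x; nra.
have x1 : x <= w / 4 by rewrite /x; nra.
set Q := 3 - 2 * (x + w/4) + (x ^+ 2 + x * (w/4) + (w/4) ^+ 2) / 2.
have Q3 : Q <= 3 by rewrite /Q; nra.
have Q0 : 0 <= Q by rewrite /Q; nra.
have sq2 : 2 <= 4 * (1 - w / 6) ^+ 2 by nra.
have x_sub : x - w/4 = - (w/2) * (1/2 - c) by rewrite /x; field.
have defect_sub : -2 + 3 * x - 2 * x ^+ 2 + x ^+ 3 / 2 -
    (-2 + 3 * (w/4) - 2 * (w/4) ^+ 2 + (w/4) ^+ 3 / 2) = (x - w/4) * Q.
  by rewrite /Q; ring.
rewrite x_sub in defect_sub.
have defect : 0 <= -2 + 3 * x - 2 * x ^+ 2 + x ^+ 3 / 2 + 4 * (1 - c) * (1 - w / 6) ^+ 2.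
  have : 0 <= (1/2 - c) * (4 * (1 - w / 6) ^+ 2 - w/2 * Q) by apply: mulr_ge0; nra.
  nra.
rewrite -subr_ge0.
have -> : (1 - x) ^+ 4 - (1 - 4 * c * (1 - c) * (w * (1 - w / 6) ^+ 2)) =
    2 * x * (-2 + 3 * x - 2 * x ^+ 2 + x ^+ 3 / 2 + 4 * (1 - c) * (1 - w / 6) ^+ 2).
  by rewrite /x; field.
by apply: mulr_ge0 => //; lra.
Qed.

Lemma sin2_gap_le_expR (c g y : R) : 0 < c <= 1 -> 0 < y <= 16/15 -> c <= g ->
    (c <= 1/2 -> 2 * c * (1 - c) <= g) ->
  1 - 2 * g * sin y ^+ 2 <= expR (- (2 * c * y ^+ 2)).
Proof.
move=> /andP[c0 c1] /andP[y0 y1] cg cg2.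
set w := y ^+ 2.
have w0 : 0 <= w by rewrite /w; nra.
have w1 : w <= 256/225 by rewrite /w; nra.
have v0 : 0 <= w * (1 - w / 6) ^+ 2 by rewrite mulr_ge0 ?sqr_ge0.
have sin2 : w * (1 - w / 6) ^+ 2 <= sin y ^+ 2.
  have cubic0 : 0 <= y - y ^+ 3 / 6 by rewrite /w in w1; nra.
  have -> : w * (1 - w / 6) ^+ 2 = (y - y ^+ 3 / 6) ^+ 2 by rewrite /w; field.
  apply: lerXn2r; rewrite ?nnegrE //; last by apply: sin_ge_cubic; lra.
  by apply: le_trans cubic0 _; apply: sin_ge_cubic; lra.
apply: (@le_trans _ _ (1 - 2 * g * (w * (1 - w / 6) ^+ 2))); first nra.
apply: (le_trans _ (@expR_ge_quartic _ (2 * c * w) _)); last by apply/andP; nra.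
have -> : 2 * c * w / 4 = c * w / 2 by field.
have w01 : 0 <= w <= 256/225 by apply/andP.
have [ch|ch] := lerP c (1/2).
  have c01 : 0 <= c <= 1/2 by apply/andP; lra.
  by have := gap_le_quartic_small c01 w01; have := cg2 ch; nra.
have c01 : 1/2 <= c <= 1 by apply/andP; lra.
by have := gap_le_quartic_large c01 w01; nra.
Qed.

End GapBounds.

Section Collision.
Variables (R : realFieldType) (T : finType) (K : eqType) (h : T -> K) (D : T -> R).
Hypotheses (D_ge0 : forall x, 0 <= D x) (D_sum1 : \sum_x D x = 1).

Definition class_mass (y : T) : R := \sum_(z | h y == h z) D z.

Definition collision : R := \sum_y D y * class_mass y.

Lemma class_mass_ge0 y : 0 <= class_mass y.
Proof. exact: sumr_ge0. Qed.

Lemma class_massD_le1 y y' : h y != h y' -> class_mass y + class_mass y' <= 1.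
Proof.
move=> hyy'; rewrite -D_sum1 /class_mass !(big_mkcond (fun z => h _ == h z)) -big_split /=.
apply: ler_sum => z _.
case: eqP => [e|_]; case: eqP => [e'|_]; rewrite ?addr0 ?add0r //.
by move: hyy'; rewrite e e' eqxx.
Qed.

Lemma collision_le m : (forall y, class_mass y <= m) -> collision <= m.
Proof.
move=> le_m; rewrite /collision -[m]mul1r -D_sum1 mulr_suml.
by apply: ler_sum => y _; apply: ler_wpM2l.
Qed.

(* The heaviest class contributes m^2 and every other point lies in a class of mass at most 1 - m. *)
Lemma collision_le_max_class y0 : (forall y, class_mass y <= class_mass y0) ->
  collision <= class_mass y0 ^+ 2 + (1 - class_mass y0) ^+ 2.
Proof.
move=> y0_max; set m := class_mass y0.
have outside : \sum_(y | h y0 != h y) D y = 1 - m.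
  by rewrite -D_sum1 [X in X - _](bigID (fun y => h y0 == h y)) /= addrC addrK.
rewrite /collision (bigID (fun y => h y0 == h y)) /=; apply: lerD.
  rewrite expr2 mulr_suml; apply/ler_sum => y /eqP e.
  by rewrite /m /class_mass e.
rewrite expr2 -{1}outside mulr_suml; apply: ler_sum => y hy.
by apply: ler_wpM2l => //; have := class_massD_le1 hy; rewrite /m; lra.
Qed.

Lemma collision_bounds c : (forall y, class_mass y <= 1 - c) ->
  collision <= 1 - c /\ (c <= 1/2 -> collision <= 1 - 2 * c * (1 - c)).
Proof.
move=> le_c; split; first exact: collision_le.
case: (pickP (@predT T)) => [y1 _|T0]; last first.
  by move: D_sum1; rewrite big_pred0 // => /eqP; rewrite eq_sym oner_eq0.
have [y0 _ y0_max] := @real_arg_maxP R T y1 xpredT class_mass isT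
  (fun y _ => ger0_real (class_mass_ge0 y)).
have le_y0 : forall y, class_mass y <= class_mass y0 by move=> y; apply: y0_max.
have := le_c y0; have := class_mass_ge0 y0.
move: (collision_le le_y0) (collision_le_max_class le_y0).
set m := class_mass y0; set P := collision => P_le_m P_le_sqr m0 m_le c_small.
have [cm|mc] := lerP c m; last nra.
(* m^2 + (1 - m)^2 grows with |m - 1/2|, and c <= m <= 1 - c *)
have : m ^+ 2 + (1 - m) ^+ 2 <= c ^+ 2 + (1 - c) ^+ 2 by nra.
nra.
Qed.

End Collision.

Local Open Scope complex_scope.

Section AdditiveCharacter.
Variables (R : realType) (p : nat).
Hypotheses (p_prime : prime p) (p_ge3 : (3 <= p)%N).

Let p_gt0 : 0 < p%:R :> R.
Proof. by rewrite ltr0n; lia. Qed.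

Definition theta : R := pi *+ 2 / p%:R.

Definition omega : R[i] := Complex (cos theta) (sin theta).

Lemma omegaX n : omega ^+ n = Complex (cos (n%:R * theta)) (sin (n%:R * theta)).
Proof.
elim: n => [|n IH]; first by rewrite expr0 mul0r cos0 sin0.
rewrite exprSr IH -natr1 mulrDl mul1r cosD sinD /omega /=.
by congr Complex; ring.
Qed.

Lemma mulrn_theta : p%:R * theta = pi *+ 2.
Proof. by rewrite /theta mulrC divfK // gt_eqF. Qed.

Lemma omega_p : omega ^+ p = 1.
Proof. by rewrite omegaX mulrn_theta cos2pi sin2pi. Qed.

Lemma theta_gt0 : 0 < theta.
Proof. by rewrite divr_gt0 // mulrn_wgt0 // pi_gt0. Qed.

Lemma theta_lt_pi : theta < pi.
Proof.
rewrite ltr_pdivrMr // mulr2n.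
have : 3 <= p%:R :> R by rewrite (ler_nat R 3 p).
have := pi_gt0 R; nra.
Qed.

Lemma omega_neq1 : omega != 1.
Proof.
apply/eqP => /(congr1 (@complex.Im R)) /= sin0.
have : 0 < sin theta by apply: sin_gt0_pi; rewrite theta_gt0 theta_lt_pi.
by rewrite sin0 ltxx.
Qed.

Lemma norm_omega : `|omega| = 1.
Proof. by rewrite normc_def /= cos2Dsin2 sqrtr1. Qed.

(* For 0 < n < p the angle n theta lies in [theta, 2 pi - theta]. *)
Lemma cos_mulrn_theta_le n : (0 < n < p)%N -> cos (n%:R * theta) <= cos theta.
Proof.
have half_le m : (0 < m)%N -> (m * 2 <= p)%N -> cos (m%:R * theta) <= cos theta.
  move=> m0 mp; have t0 := theta_gt0; have pi0 := pi_gt0 R.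
  have m_le_pi : m%:R * theta <= pi.
    have : (m * 2)%:R <= p%:R :> R by rewrite ler_nat.
    rewrite natrM /theta mulrA ler_pdivrMr // -mulr_natr; nra.
  have [->|m_neq1] := eqVneq m 1%N; first by rewrite mul1r.
  have : theta < m%:R * theta.
    have : 1 < m%:R :> R by rewrite ltr1n; lia.
    nra.
  rewrite -ltr_cos ?in_itv /= ?(ltW t0) ?(ltW theta_lt_pi) ?m_le_pi //; first by move/ltW.
  by rewrite mulr_ge0 // ltW.
move=> /andP[n0 np]; have [|np2] := leqP (n * 2) p; first exact: half_le.
have -> : cos (n%:R * theta) = cos ((p - n)%:R * theta).
  by rewrite natrB ?(ltnW np) // mulrBl mulrn_theta addrC cosD2pi cosN.
apply: half_le; lia.
Qed.

Lemma cos_theta : cos theta = 1 - 2 * sin (pi / p%:R) ^+ 2.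
Proof.
have -> : theta = (pi / p%:R) *+ 2 by rewrite /theta mulrnAl.
by rewrite cos_mulr2n cos2sin2 mulr2n; ring.
Qed.

Definition chi (t : 'F_p) : R[i] := omega ^+ t.

Lemma chiD a b : chi (a + b) = chi a * chi b.
Proof.
have val_add : nat_of_ord (a + b) = ((a + b) %% p)%N.
  by rewrite /=; congr (_ %% _)%N; apply: Fp_cast.
by rewrite /chi val_add (expr_mod _ omega_p) exprD.
Qed.

Lemma chi0 : chi 0 = 1.
Proof. by rewrite /chi expr0. Qed.

Lemma chi1 : chi 1 = omega.
Proof. by rewrite /chi /= modn_small ?expr1. Qed.

Lemma norm_chi t : `|chi t| = 1.
Proof. by rewrite /chi normrX norm_omega expr1n. Qed.

Lemma Fp_val_lt (a : 'F_p) : (a < p)%N.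
Proof. by have := ltn_ord a; move: (nat_of_ord a) => n; rewrite Fp_cast. Qed.

Lemma cos_chi_angle_le (a b : 'F_p) : a != b ->
  cos (a%:R * theta - b%:R * theta) <= cos theta.
Proof.
move=> ab; have ha := Fp_val_lt a; have hb := Fp_val_lt b.
have : nat_of_ord a != nat_of_ord b by [].
case: (ltngtP a b) => // lt_ab _.
  rewrite -cosN opprB -mulrBl -natrB ?(ltnW lt_ab) //.
  by apply: cos_mulrn_theta_le; lia.
rewrite -mulrBl -natrB ?(ltnW lt_ab) //.
by apply: cos_mulrn_theta_le; lia.
Qed.

End AdditiveCharacter.

Lemma normc_real (R : rcfType) (a : R) : `|a%:C| = `|a|%:C.
Proof. by rewrite normc_def /= expr0n addr0 sqrtr_sqr. Qed.

Section FourierAnalysis.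
Variables (R : realType) (p k : nat).
Hypotheses (p_prime : prime p) (p_ge3 : (3 <= p)%N).
Local Notation V := 'rV['F_p]_k.

Definition dotv (r z : V) : 'F_p := \sum_i r 0 i * z 0 i.

Lemma dotvC r z : dotv r z = dotv z r.
Proof. by apply: eq_bigr => i _; rewrite mulrC. Qed.

Lemma dotvDr r z1 z2 : dotv r (z1 + z2) = dotv r z1 + dotv r z2.
Proof. by rewrite /dotv -big_split; apply: eq_bigr => i _; rewrite mxE mulrDr. Qed.

Lemma dotvDl r1 r2 z : dotv (r1 + r2) z = dotv r1 z + dotv r2 z.
Proof. by rewrite dotvC dotvDr !(dotvC z). Qed.

Lemma dotv0r r : dotv r 0 = 0.
Proof. by apply: big1 => i _; rewrite mxE mulr0. Qed.

Lemma dotv0l z : dotv 0 z = 0.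
Proof. by rewrite dotvC dotv0r. Qed.

Lemma dotvBr r z1 z2 : dotv r (z1 - z2) = dotv r z1 - dotv r z2.
Proof.
rewrite dotvDr; congr (_ + _); rewrite /dotv -sumrN.
by apply: eq_bigr => i _; rewrite mxE mulrN.
Qed.

Lemma dotv_eq1 z : z != 0 -> exists s, dotv s z = 1.
Proof.
move=> z0; have [j zj] : exists j, z 0 j != 0.
  apply/existsP; apply: contraNT z0; rewrite negb_exists => /forallP z_eq0.
  by apply/eqP/rowP => j; rewrite mxE; apply/eqP; rewrite -[_ == _]negbK z_eq0.
exists ((z 0 j)^-1 *: delta_mx 0 j); rewrite /dotv (bigD1 j) //= big1.
  by rewrite !mxE !eqxx mulr1 addr0 mulVf.
by move=> i ij; rewrite !mxE (negbTE ij) andbF mulr0 mul0r.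
Qed.

Lemma dotv_mulmx_tr r z : (z *m r^T == 0) = (dotv r z == 0).
Proof.
have -> : dotv r z = (z *m r^T) 0 0.
  by rewrite mxE dotvC; apply: eq_bigr => i _; rewrite mxE.
apply/eqP/eqP => [->|z_r]; first by rewrite mxE.
by apply/matrixP => i j; rewrite !ord1 z_r mxE.
Qed.

Lemma dotv_level_set_proper_affine r y : r != 0 ->
  proper_affine_subspace [set z : V | dotv r y == dotv r z].
Proof.
move=> r0; pose f : 'Hom(V, 'rV['F_p]_1) := linfun (mulmxr r^T).
exists y, (lker f); split.
  apply/eqP => ker_full; have [s rs1] := dotv_eq1 r0.
  have : s \in lker f by rewrite ker_full memvf.
  by rewrite memv_ker lfunE /= dotv_mulmx_tr dotvC rs1 oner_eq0.
apply/setP => z; rewrite !inE memv_ker lfunE /= dotv_mulmx_tr dotvBr subr_eq0.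
by rewrite eq_sym.
Qed.

Definition echar (r z : V) : R[i] := chi R (dotv r z).

Lemma echarDr r z1 z2 : echar r (z1 + z2) = echar r z1 * echar r z2.
Proof. by rewrite /echar dotvDr chiD. Qed.

Lemma echarDl r1 r2 z : echar (r1 + r2) z = echar r1 z * echar r2 z.
Proof. by rewrite /echar dotvDl chiD. Qed.

Lemma echar0r r : echar r 0 = 1.
Proof. by rewrite /echar dotv0r chi0. Qed.

Lemma echar0l z : echar 0 z = 1.
Proof. by rewrite /echar dotv0l chi0. Qed.

Lemma echar_sum r M (f : 'I_M -> V) : echar r (\sum_i f i) = \prod_i echar r (f i).
Proof. exact: (big_morph (echar r) (echarDr r) (echar0r r)). Qed.

Lemma card_rV : #|{: V}| = (p ^ k)%N.
Proof. by rewrite card_mx card_Fp // mul1n. Qed.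

Lemma sum_echar z : \sum_r echar r z = if z == 0 then (p ^ k)%:R else 0.
Proof.
have [->|z0] := eqVneq z 0.
  by under eq_bigr do rewrite echar0r; rewrite sumr_const card_rV.
have [s sz1] := dotv_eq1 z0; set S := \sum_r echar r z.
(* translating the summation variable by s multiplies S by echar s z = omega *)
have : S = S * omega R p.
  rewrite {1}/S (reindex_inj (addIr s)) /= -(chi1 R p) -sz1 mulr_suml.
  by apply: eq_bigr => r _; rewrite echarDl.
move/eqP; rewrite -subr_eq0 -{1}[S]mulr1 -mulrBr mulf_eq0 subr_eq0 eq_sym.
by rewrite [1 == _]eq_sym (negbTE (omega_neq1 R p_prime p_ge3)) orbF eq_sym => /eqP.
Qed.

Definition fourier (D : V -> R) (r : V) : R[i] := \sum_y (D y)%:C * echar r y.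

Lemma fourier0 (D : V -> R) : \sum_y D y = 1 -> fourier D 0 = 1.
Proof.
move=> D1; rewrite /fourier; under eq_bigr do rewrite echar0l mulr1.
by rewrite -rmorph_sum D1.
Qed.

Lemma convpow_fourier (D : V -> R) M x :
  ((p ^ k)%:R * convpow M D x)%:C = \sum_r fourier D r ^+ M * echar r (- x).
Proof.
under eq_bigr => r _.
  rewrite -[M in _ ^+ M]card_ord -prodr_const /fourier bigA_distr_bigA /= mulr_suml.
  under eq_bigr => f _ do rewrite big_split /= -rmorph_prod -echar_sum -mulrA -echarDr.
  over.
rewrite /= exchange_big /=.
under eq_bigr => f _ do rewrite -mulr_sumr sum_echar subr_eq0.
rewrite /convpow rmorphM rmorph_nat rmorph_sum mulr_sumr big_mkcond /=.
by apply: eq_bigr => f _; case: eqP => _; rewrite ?mulr0 // mulrC.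
Qed.

Definition angle (r y : V) : R := (dotv r y)%:R * theta R p.

Lemma fourierE (D : V -> R) r : fourier D r =
  Complex (\sum_y D y * cos (angle r y)) (\sum_y D y * sin (angle r y)).
Proof.
rewrite /fourier; elim/big_rec3: _ => // y a b c _ ->.
by rewrite /echar /chi omegaX /=; congr Complex; ring.
Qed.

Lemma sum_cos_sqr_add_sum_sin_sqr (D : V -> R) r :
  (\sum_y D y * cos (angle r y)) ^+ 2 + (\sum_y D y * sin (angle r y)) ^+ 2 =
  \sum_y \sum_z D y * D z * cos (angle r y - angle r z).
Proof.
rewrite !expr2 !mulr_suml -big_split /=; apply: eq_bigr => y _.
rewrite !mulr_sumr -big_split /=; apply: eq_bigr => z _.
by rewrite cosB; ring.
Qed.

(* cos of an angle difference equals 1 when both points lie on the same level set of dotv r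
   and is at most cos theta otherwise *)
Lemma sum_cos_angle_le (D : V -> R) r : is_distr D ->
  \sum_y \sum_z D y * D z * cos (angle r y - angle r z) <=
  1 - (1 - cos (theta R p)) * (1 - collision (dotv r) D).
Proof.
move=> [D0 D1]; set t := theta R p.
apply: (@le_trans _ _ (\sum_y \sum_z D y * D z * (cos t + (1 - cos t) * (dotv r y == dotv r z)%:R))).
  apply: ler_sum => y _; apply: ler_sum => z _.
  apply: ler_wpM2l; first exact: mulr_ge0.
  case: eqP => [_|/eqP ne]; first by rewrite mulr1; have := cos_le1 (angle r y - angle r z); lra.
  by rewrite mulr0 addr0; apply: cos_chi_angle_le.
rewrite le_eqVlt; apply/orP; left; apply/eqP.
have D2 : \sum_y \sum_z D y * D z = 1.
  by under eq_bigr do rewrite -mulr_sumr D1 mulr1.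
have -> : 1 - (1 - cos t) * (1 - collision (dotv r) D) =
    cos t * (\sum_y \sum_z D y * D z) + (1 - cos t) * collision (dotv r) D.
  by rewrite D2; ring.
rewrite /collision /class_mass !mulr_sumr -big_split /=; apply: eq_bigr => y _.
rewrite (big_mkcond (fun z => dotv r y == dotv r z)) !mulr_sumr -big_split /=.
by apply: eq_bigr => z _; case: eqP => _ /=; ring.
Qed.

Lemma norm_fourier_le (D : V -> R) c r : is_distr D ->
    (forall W : {set V}, proper_affine_subspace W -> mass D W <= 1 - c) -> 0 < c ->
  r != 0 -> `|fourier D r| <= (expR (- (c * (pi / p%:R) ^+ 2)))%:C.
Proof.
move=> [D0 D1] D_affine c0 r0.
have le_c y : class_mass (dotv r) D y <= 1 - c.
  have := D_affine _ (dotv_level_set_proper_affine y r0); rewrite /mass.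
  by under eq_bigl do rewrite inE.
have c01 : 0 < c <= 1.
  by have := class_mass_ge0 (dotv r) D0 0; have := le_c 0; rewrite c0 /=; lra.
have [P_le P_le_small] := collision_bounds D0 D1 le_c.
set P := collision (dotv r) D in P_le P_le_small; set y := pi / p%:R.
have p3 : 3 <= p%:R :> R by rewrite (ler_nat R 3 p).
have y0 : 0 < y by rewrite divr_gt0 ?pi_gt0 //; lra.
have y1 : y <= 16/15 by have := pi_lt_16_5 R; rewrite ler_pdivrMr; lra.
have y01 : 0 < y <= 16/15 by apply/andP.
have gap := sin2_gap_le_expR c01 y01 (_ : c <= 1 - P) (_ : c <= 1/2 -> _ <= 1 - P).
rewrite fourierE normc_def /= lecR.
rewrite -[leRHS](@ger0_norm _ (expR _)) ?expR_ge0 // -sqrtr_sqr ler_sqrt ?sqr_ge0 //.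
rewrite -expRM_natr sum_cos_sqr_add_sum_sin_sqr.
apply: le_trans (sum_cos_angle_le r (conj D0 D1)) _.
rewrite cos_theta -/y -/P.
have -> : - (c * y ^+ 2) * 2%:R = - (2 * c * y ^+ 2) by ring.
apply: le_trans (gap _ _); [lra | lra | move=> c_small].
by have := P_le_small c_small; lra.
Qed.

Lemma convpow_dist_uniform_le (D : V -> R) M x e : is_distr D -> 0 <= e ->
    (forall r, r != 0 -> `|fourier D r| <= e%:C) ->
  `|convpow M D x - p%:R ^- k| <= e ^+ M.
Proof.
move=> [_ D1] e0 le_e.
have p0 : (p%:R : R) != 0 by rewrite pnatr_eq0 -lt0n prime_gt0.
have main : ((p ^ k)%:R * convpow M D x - 1)%:C =
    \sum_(r | r != 0) fourier D r ^+ M * echar r (- x).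
  rewrite rmorphB /= convpow_fourier (bigD1 0) //= fourier0 // echar0l.
  by rewrite expr1n mulr1 addrC addrK.
have err : `|(p ^ k)%:R * convpow M D x - 1| <= (p ^ k)%:R * e ^+ M.
  rewrite -lecR -normc_real main; apply: le_trans (ler_norm_sum _ _ _) _.
  apply: (@le_trans _ _ (\sum_(r | r != 0) (e ^+ M)%:C)).
    apply: ler_sum => r r0; rewrite normrM /echar norm_chi mulr1 normrX rmorphXn.
    by apply: lerXn2r; rewrite ?nnegrE ?normr_ge0 ?ler0c ?le_e.
  rewrite -rmorph_sum lecR mulr_natl -card_rV -sumr_const [leRHS](bigD1 0) //=.
  by rewrite lerDr exprn_ge0.
have -> : convpow M D x - p%:R ^- k = p%:R ^- k * ((p ^ k)%:R * convpow M D x - 1).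
  by rewrite natrX mulrBr mulrA mulVf ?mul1r ?mulr1 // expf_neq0.
rewrite normrM ger0_norm ?invr_ge0 ?exprn_ge0 ?ler0n //.
apply: le_trans (ler_wpM2l _ err) _; first by rewrite invr_ge0 exprn_ge0 ?ler0n.
by rewrite natrX mulrA mulVf ?mul1r // expf_neq0.
Qed.

End FourierAnalysis.

Theorem lemma4p2 (R : realType) (p k : nat) (c : R) (D : 'rV['F_p]_k -> R) :
  prime p -> (3 <= p)%N -> (1 <= k)%N -> 0 < c ->
  is_distr D ->
  (forall W : {set 'rV['F_p]_k}, proper_affine_subspace W -> mass D W <= 1 - c) ->
  forall M : nat, (0 < M)%N ->
    M%:R >= 2 * k%:R * (p%:R) ^+ 2 * ln (p%:R) / (c * pi ^+ 2) ->
    forall x : 'rV['F_p]_k,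
      `| convpow M D x - (p%:R) ^- k | <= (p%:R) ^- (2 * k).
Proof.
move=> p_prime p_ge3 _ c0 D_distr D_affine M _ M_ge x.
have p0 : 0 < p%:R :> R by rewrite ltr0n prime_gt0.
set a := c * (pi / p%:R) ^+ 2.
have a0 : 0 < a by rewrite mulr_gt0 ?exprn_gt0 ?divr_gt0 ?pi_gt0.
apply: le_trans (convpow_dist_uniform_le p_prime p_ge3 M x D_distr (expR_ge0 (- a)) _) _.
  by move=> r r0; apply: norm_fourier_le.
rewrite -[p%:R ^- _]lnK ?posrE ?invr_gt0 ?exprn_gt0 // lnV ?posrE ?exprn_gt0 // lnXn //.
apply: expRX_le_expRN => //; apply: le_trans M_ge.
suff -> : ln p%:R *+ (2 * k) / a = 2 * k%:R * p%:R ^+ 2 * ln p%:R / (c * pi ^+ 2) by [].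
rewrite /a -[ln _ *+ _]mulr_natr natrM; move: (pi_gt0 R); generalize (@pi R) => q q0.
by field; rewrite !gt_eqF.
Qed.
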